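(* Let $m\ge 2$ be an even integer and $k$ an integer with $\gcd(k,m)=1$. Let $\alpha\in\mathbb{F}_{2^m}$, $\alpha\neq 0$, and let $\sigma$ be a field automorphism of $\mathbb{F}_{2^m}$. Define $f:\mathbb{F}_{2^m}^2\to\mathbb{F}_{2^m}^2$ (identifying $\mathbb{F}_{2^m}^2$ additively with $\mathbb{F}_{2^{2m}}$) by $$f(x,y)=\big(x^{2^k+1}+\alpha\,\sigma(y^{2^k+1}),\ xy\big).$$ Then $f$ is APN if and only if $\alpha$ cannot be written as $a^{2^k+1}(t^{2^k}+t)^{1-\sigma}$ with $a,t\in\mathbb{F}_{2^m}$ and $t^{2^k}+t\neq 0$, where $z^{1-\sigma}$ denotes $z/\sigma(z)$ for $z\neq 0$.
   Context: A function $f$ on an elementary abelian $2$-group $V$ (here $V=\mathbb{F}_{2^{2m}}$) is almost perfect nonlinear (APN) if for every $a\neq 0$ and every $b$ the equation $f(x+a)-f(x)=b$ has at most two solutions $x\in V$. *)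

From HB Require Import structures.
From mathcomp Require Import all_boot all_order all_algebra.
Set Implicit Arguments. Unset Strict Implicit. Unset Printing Implicit Defensive.
Import GRing.Theory.
Local Open Scope ring_scope.

(* Here V = F^2 (additively F_{2^(2m)}) for a finite field F; the group
   structure is the componentwise addition of pairs. *)
Definition APN (F : finFieldType) (f : F * F -> F * F) : Prop :=
  forall a b : F * F, a != 0 ->
    leq #|[set x : F * F | f (x + a) - f x == b]| 2.

Definition fmap (F : finFieldType) (k : nat) (alpha : F) (sigma : F -> F)
  (v : F * F) : F * F :=
  (v.1 ^+ (2 ^ k + 1) + alpha * sigma (v.2 ^+ (2 ^ k + 1)), v.1 * v.2).

From HB Require Import structures.
From mathcomp Require Import all_boot all_order all_algebra all_field.
From mathcomp Require Import ring.
Set Implicit Arguments. Unset Strict Implicit. Unset Printing Implicit Defensive.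
Import GRing.Theory.
Local Open Scope ring_scope.

(* The map f is quadratic: f(w + d) - f(w) = B(d, w) + f(d) with B(d, -) additive and
   B(d, d) = 0, so f is APN exactly when, for every d <> 0, the kernel of B(d, -) is
   {0, d}.  The second coordinate of B(d, w) = 0 forces w = u d for a scalar u, and
   the first one then reads
     a^(2^k+1) (u^(2^k) + u) + alpha sigma(b^(2^k+1) (u^(2^k) + u)) = 0   (d = (a, b)).
   Since gcd(k, m) = 1, u^(2^k) + u = 0 only for u in {0, 1}, i.e. w in {0, d}; any
   other root u yields exactly a representation alpha = (a / sigma b)^(2^k+1) z^(1-sigma)
   with z = u^(2^k) + u, and conversely such a representation gives the root u = t of
   the kernel equation for d = (a, 1). *)

(* Products of finite Z-modules, such as F * F, are finite Z-modules. *)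
HB.saturate prod.

Section QuadraticDerivative.
Variables (V : finZmodType) (f : V -> V) (B : V -> V -> V).
Hypothesis derivE : forall a x, f (x + a) - f x = B a x + f a.
Hypothesis B_sub : forall a, {morph B a : x y / x - y}.
Hypothesis B_diag : forall a, B a a = 0.

Lemma deriv_eq_valE a x : (f (x + a) - f x == f a) = (B a x == 0).
Proof. by rewrite derivE -subr_eq0 addrK. Qed.

Lemma B_zero a : B a 0 = 0.
Proof. by rewrite -[X in B a X](subrr 0) B_sub subrr. Qed.

Lemma deriv_card_le2P :
  (forall a b : V, a != 0 -> leq #|[set x | f (x + a) - f x == b]| 2) <->
  (forall a : V, a != 0 -> forall x, B a x = 0 -> x = 0 \/ x = a).
Proof.
split=> [le2 a a0 x Bx | kerB a b a0].
  have [-> | x0] := eqVneq x 0; first by left.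
  have [-> | xa] := eqVneq x a; first by right.
  exfalso; move: (le2 a (f a) a0); rewrite leqNgt => /negP; apply; apply/card_gt2P.
  exists 0, a, x; rewrite !inE !deriv_eq_valE B_zero B_diag Bx eqxx.
  by do 2!split=> //; rewrite eq_sym.
set S := [set x | _].
have [-> | [x0 Sx0]] := set_0Vmem S; first by rewrite cards0.
apply: (@leq_trans #|[set x0; x0 + a]|); last by rewrite cards2 ltnS leq_b1.
apply: subset_leq_card; apply/subsetP => x; rewrite !inE in Sx0 * => Sx.
have Bx : B a (x - x0) = 0.
  by rewrite B_sub; apply/eqP; rewrite subr_eq0; apply/eqP/(addIr (f a));
     rewrite -!derivE (eqP Sx) (eqP Sx0).
by case: (kerB a a0 _ Bx) => /eqP; rewrite subr_eq ?add0r => /eqP ->;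
   rewrite ?(addrC a) eqxx ?orbT.
Qed.

End QuadraticDerivative.

Lemma expf_fixed_prime_subfield (F : finFieldType) p m k (u : F) :
  #|F| = (p ^ m)%N -> coprime k m -> u ^+ (p ^ k) = u -> u ^+ p = u.
Proof.
move=> cardF co_km uk.
have iterX n j : u ^+ (p ^ n) = u -> u ^+ (p ^ (n * j)) = u.
  by move=> un; elim: j => [|j IHj]; rewrite ?muln0 ?expr1 // mulnS expnD exprM un.
have um : u ^+ (p ^ m) = u by rewrite -cardF expf_card.
have [k0 | k_gt0] := posnP k.
  by move: co_km um; rewrite k0 /coprime gcd0n => /eqP ->.
case: (egcdnP m k_gt0) => km kn def_km _.
by rewrite -{2}(iterX _ km uk) mulnC def_km (eqP co_km) expnD expn1 exprM mulnC iterX.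
Qed.

Lemma proportional_pair (F : fieldType) (a b x y : F) :
  (a, b) != 0 -> x * b = a * y -> exists u, x = u * a /\ y = u * b.
Proof.
move=> ab0 xb_ay; have [a0 | a0] := eqVneq a 0.
  have b0 : b != 0 by apply: contraNneq ab0 => b0; rewrite a0 b0.
  exists (y / b); rewrite a0 mulr0 divfK //; split=> //.
  by apply/eqP; rewrite -(mulIr_eq0 _ (mulIf b0)) xb_ay a0 mul0r.
exists (x / a); rewrite divfK //; split=> //.
by rewrite mulrAC xb_ay mulrAC divff ?mul1r.
Qed.

Section Char2.
Variables (F : finFieldType) (k : nat).
Hypothesis F2 : 2 \in [pchar F].

Lemma expr2nD (x y : F) : (x + y) ^+ (2 ^ k) = x ^+ (2 ^ k) + y ^+ (2 ^ k).
Proof. by apply: exprDn_pchar; rewrite pnatX pnatE //; apply/orP; left. Qed.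

Lemma expr2n_add_eq0 m (t : F) : #|F| = (2 ^ m)%N -> coprime k m ->
  t ^+ (2 ^ k) + t = 0 -> t = 0 \/ t = 1.
Proof.
move=> cardF co_km /addr0_eq; rewrite oppr_pchar2 //.
move/(expf_fixed_prime_subfield cardF co_km)/eqP.
rewrite expr2 -subr_eq0 -{3}[t]mulr1 -mulrBr mulf_eq0 subr_eq0.
by case/orP=> /eqP; [left | right].
Qed.

End Char2.

Section FmapPolar.
Variables (F : finFieldType) (k : nat) (alpha : F) (sigma : {rmorphism F -> F}).
Hypothesis F2 : 2 \in [pchar F].

Definition fmap_polar (d w : F * F) : F * F :=
  (w.1 ^+ (2 ^ k) * d.1 + w.1 * d.1 ^+ (2 ^ k)
     + alpha * sigma (w.2 ^+ (2 ^ k) * d.2 + w.2 * d.2 ^+ (2 ^ k)),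
   w.1 * d.2 + d.1 * w.2).

Lemma fmap_derivE d w :
  fmap k alpha sigma (w + d) - fmap k alpha sigma w
  = fmap_polar d w + fmap k alpha sigma d.
Proof.
case: d w => [a b] [x y]; rewrite /fmap /fmap_polar /= !exprD !expr1 !expr2nD //.
by apply: injective_projections => /=; ring.
Qed.

Lemma fmap_polarB d : {morph fmap_polar d : v w / v - w}.
Proof.
move=> [x y] [x' y']; apply: injective_projections => /=; last by ring.
by rewrite !oppr_pchar2 // !expr2nD //; ring.
Qed.

Lemma fmap_polar_diag d : fmap_polar d d = 0.
Proof.
by rewrite /fmap_polar mulrC (mulrC d.2) !addrr_pchar2 // rmorph0 mulr0 addr0.
Qed.

Lemma fmap_polar_scaled a b u :
  fmap_polar (a, b) (u * a, u * b) =
  (a ^+ (2 ^ k + 1) * (u ^+ (2 ^ k) + u)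
     + alpha * sigma (b ^+ (2 ^ k + 1) * (u ^+ (2 ^ k) + u)), 0).
Proof.
apply: injective_projections => /=; first by rewrite !exprMn !exprD !expr1; ring.
by rewrite mulrCA mulrA addrr_pchar2.
Qed.

Lemma alpha_repr_of_polar_root a b z : (a, b) != 0 -> z != 0 ->
  a ^+ (2 ^ k + 1) * z + alpha * sigma (b ^+ (2 ^ k + 1) * z) = 0 ->
  alpha = (a / sigma b) ^+ (2 ^ k + 1) * (z / sigma z).
Proof.
move=> ab0 z0 /addr0_eq; rewrite oppr_pchar2 // rmorphM rmorphXn => root.
have b0 : b != 0.
  apply: contraNneq ab0 => b0; move: root.
  rewrite b0 rmorph0 expr0n addn1 /= !mul0r mulr0 => /eqP.
  by rewrite mulf_eq0 (negbTE z0) orbF expf_eq0 => /andP[_ /eqP->].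
have sb0 : sigma b != 0 by rewrite fmorph_eq0.
have sz0 : sigma z != 0 by rewrite fmorph_eq0.
have bn0 : sigma b ^+ (2 ^ k + 1) != 0 by rewrite expf_neq0.
apply: (mulIf (mulf_neq0 bn0 sz0)); rewrite -root expr_div_n.
move: (a ^+ _) (sigma b ^+ _) bn0 => A B B0.
by field; rewrite B0 sz0.
Qed.

Lemma fmap_polar_kerP m : #|F| = (2 ^ m)%N -> coprime k m ->
  (forall d, d != 0 -> forall w, fmap_polar d w = 0 -> w = 0 \/ w = d) <->
  ~ (exists a t : F,
        t ^+ (2 ^ k) + t != 0 /\
        alpha = a ^+ (2 ^ k + 1) *
                ((t ^+ (2 ^ k) + t) / sigma (t ^+ (2 ^ k) + t))).
Proof.
move=> cardF co_km.
split=> [kerB [a [t [z0 def_alpha]]] | no_repr [a b] ab0 [x y] polar0].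
  have d0 : (a, 1) != 0 :> F * F by apply/eqP => /(congr1 snd)/eqP; rewrite oner_eq0.
  have polar0 : fmap_polar (a, 1) (t * a, t * 1) = 0.
    rewrite fmap_polar_scaled expr1n !mul1r def_alpha -mulrA divfK ?fmorph_eq0 //.
    by rewrite addrr_pchar2.
  have t01 : t = 0 \/ t = 1.
    by case/(kerB _ d0): polar0 => /(congr1 snd) /=; rewrite mulr1; [left | right].
  by move: z0; case: t01 => ->;
     rewrite ?expr0n ?expn_eq0 ?addr0 ?expr1n ?addrr_pchar2 ?eqxx.
have [u [xE yE]] : exists u, x = u * a /\ y = u * b.
  apply: proportional_pair ab0 _; apply/eqP; rewrite -subr_eq0 oppr_pchar2 //.
  by move/(congr1 snd): polar0 => /= ->.
subst x y; move/(congr1 fst): polar0; rewrite fmap_polar_scaled /= => root.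
have [z0 | z0] := eqVneq (u ^+ (2 ^ k) + u) 0.
  by case: (expr2n_add_eq0 F2 cardF co_km z0) => ->;
     rewrite !(mul0r, mul1r); [left | right].
by case: no_repr; exists (a / sigma b), u; split; last exact: alpha_repr_of_polar_root.
Qed.

End FmapPolar.

Theorem theorem9 (F : finFieldType) (m k : nat)
  (hcard : #|F| = (2 ^ m)%N) (hm2 : (2 <= m)%N) (hmeven : ~~ odd m)
  (hk : coprime k m)
  (alpha : F) (halpha : alpha != 0)
  (sigma : {rmorphism F -> F}) (hsigma : bijective sigma) :
  APN (fmap k alpha sigma) <->
  ~ (exists a t : F,
        t ^+ (2 ^ k) + t != 0 /\
        alpha = a ^+ (2 ^ k + 1) *
                ((t ^+ (2 ^ k) + t) / sigma (t ^+ (2 ^ k) + t))).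
Proof.
have F2 : 2 \in [pchar F] by apply: card_finPcharP hcard _.
rewrite -(fmap_polar_kerP alpha sigma F2 hcard hk).
exact: deriv_card_le2P (fmap_derivE k alpha sigma F2) (fmap_polarB k alpha sigma F2)
                       (fmap_polar_diag k alpha sigma F2).
Qed.
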